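(* For every $0\le i\le s$, the subspace $\mathfrak{n}_i=\mathrm{span}\{y_\eta:\eta\in A_i\}$ is a Lie subalgebra of $\mathfrak{n}$, and consequently $\mathcal{L}_i=\mathfrak{n}_i/\mathfrak{m}$ is a Lie subalgebra of $\mathcal{L}=\mathfrak{n}/\mathfrak{m}$.
   Context: $K$ is a field of characteristic zero, $n\ge 2$, $\mathfrak{n}$ is the Lie algebra of strictly lower triangular $n\times n$ matrices over $K$, $A=\{(i,j): n\ge i>j\ge 1\}$, $y_{ij}=E_{ij}$ (matrix units), $y_\xi=y_{ij}$ for $\xi=(i,j)$. $M\subset A$ is such that $\mathfrak{m}=\mathrm{span}\{y_\xi:\xi\in M\}$ is an ideal of $\mathfrak{n}$. Order on $A$: $(i,j)\succ(i',j')$ iff $j<j'$, or $j=j'$ and $i>i'$. Diagram construction: Step 0: fill the places of $M$ with $\bullet$. Step $i\ge1$ (while unfilled places of $A$ remain): put $\otimes$ on the $\succ$-greatest unfilled place $(k,t)$, call it $\xi_i$; then for each $a$ with $t<a<k$ such that both $(k,a)$ and $(a,t)$ are unfilled, put $-$ on $(k,a)$ and $+$ on $(a,t)$ (if one of them is already filled, leave the other unchanged). $s$ is the total number of steps with $\otimes$. $B_i$ is the set of places of $A$ still unfilled after step $i$ (so $B_0=A\setminus M$, $B_s=\emptyset$), and $A_i=B_i\sqcup M$. *)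

From HB Require Import structures.
From mathcomp Require Import all_boot all_order all_algebra.
Set Implicit Arguments. Unset Strict Implicit. Unset Printing Implicit Defensive.
Import Order.TTheory GRing.Theory Num.Theory.
Local Open Scope ring_scope.

(* Places (i,j) are pairs of 0-based indices in 'I_n (paper's (i+1,j+1)). *)
Definition place (n : nat) := ('I_n * 'I_n)%type.

(* A = {(i,j) : i > j}: the places of strictly lower triangular matrices. *)
Definition Aset (n : nat) : {set place n} := [set p : place n | (p.2 < p.1)%N].

Definition succ_pl (n : nat) (p q : place n) : bool :=
  ((p.2 < q.2)%N || ((p.2 == q.2) && (q.1 < p.1)%N)).

Definition greatest (n : nat) (B : {set place n}) : option (place n) :=
  [pick xi in B | [forall eta in B, (eta == xi) || succ_pl xi eta]].

(* Places getting a '-' or '+' when xi = (k,t) is marked, with B unfilled: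
   (k,a) and (a,t) for t < a < k with both (k,a), (a,t) unfilled. *)
Definition marked (n : nat) (B : {set place n}) (xi : place n) : {set place n} :=
  [set p : place n | [exists a : 'I_n,
     [&& (xi.2 < a)%N, (a < xi.1)%N, (xi.1, a) \in B, (a, xi.2) \in B &
         (p == (xi.1, a)) || (p == (a, xi.2))]]].

(* One step of the diagram construction, acting on the set of unfilled places. *)
Definition step (n : nat) (B : {set place n}) : {set place n} :=
  match greatest B with
  | Some xi => (B :\ xi) :\: marked B xi
  | None => B
  end.

Definition Bset (n : nat) (M : {set place n}) (i : nat) : {set place n} :=
  iter i (@step n) (Aset n :\: M).

Definition Aiset (n : nat) (M : {set place n}) (i : nat) : {set place n} :=
  Bset M i :|: M.

(* s = number of steps: the least i with B_i empty (B_{#|A|} is empty). *)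
Definition nsteps (n : nat) (M : {set place n}) : nat :=
  find (fun i => Bset M i == set0) (iota 0 (#|Aset n|.+1)).

(* span{ y_xi : xi in S } with y_(i,j) = E_ij the matrix unit. *)
Definition in_span (K : fieldType) (n : nat) (S : {set place n}) (x : 'M[K]_n) : Prop :=
  exists c : place n -> K, x = \sum_(p in S) c p *: delta_mx p.1 p.2.
Arguments in_span K {n} S x.

Definition lie_br (K : fieldType) (n : nat) (x y : 'M[K]_n) : 'M[K]_n :=
  x *m y - y *m x.

Definition is_lie_subalg (K : fieldType) (n : nat) (S T : {set place n}) : Prop :=
  (forall x : 'M[K]_n, in_span K S x -> in_span K T x) /\
  (forall x y : 'M[K]_n, in_span K S x -> in_span K S y -> in_span K S (lie_br x y)).

Definition is_lie_ideal (K : fieldType) (n : nat) (S T : {set place n}) : Prop :=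
  (forall x : 'M[K]_n, in_span K S x -> in_span K T x) /\
  (forall x y : 'M[K]_n, in_span K T x -> in_span K S y -> in_span K S (lie_br x y)).
Arguments is_lie_subalg K {n} S T.
Arguments is_lie_ideal K {n} S T.

From HB Require Import structures.
From mathcomp Require Import all_boot all_order all_algebra.
Import GRing.Theory.
Set Implicit Arguments. Unset Strict Implicit.

(* The subspaces n_i are spanned by matrix units, so everything reduces to a
   combinatorial property of the index set.  Call a set S of places
   composition-closed when (a,b), (b,d) in S imply (a,d) in S.
   1. span{E_p : p in S} consists of the matrices supported on S, hence it is
      closed under products, thus under the bracket, whenever S is
      composition-closed (span_lie_subalg).
   2. If span M is an ideal of n, then M absorbs places of A on both sides
      (ideal_absorb_left/right).
   3. Invariant of the diagram construction: B_i avoids M and B_i \cup M is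
      composition-closed.  One step removes the new mark xi = (k,t) and all
      places (k,a), (a,t) it marks; a composite (a,d) of two surviving places
      can be neither xi nor a marked place, since its factors would then have
      been marked themselves (step_comp_closed).
   The theorem follows by applying 1 to A_i inside A and to M inside A_i. *)

Local Open Scope ring_scope.

Section Spans.
Variables (K : fieldType) (n : nat).

Lemma delta_mx_entry (p1 p2 i j : 'I_n) :
  (delta_mx p1 p2 : 'M[K]_n) i j = ((p1, p2) == (i, j))%:R.
Proof. by rewrite mxE xpair_eqE [p1 == i]eq_sym [p2 == j]eq_sym. Qed.

Lemma in_spanP (S : {set place n}) (x : 'M[K]_n) :
  in_span K S x <-> (forall i j, (i, j) \notin S -> x i j = 0).
Proof.
have delta_off p i j : p != (i, j) -> (delta_mx p.1 p.2 : 'M[K]_n) i j = 0.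
  by case: p => p1 p2 hne; rewrite delta_mx_entry (negbTE hne).
split.
- move=> [c ->] i j hij; rewrite summxE; apply: big1 => p hp.
  rewrite mxE delta_off ?mulr0 //; by apply: contraNneq hij => <-.
- move=> hx; exists (fun p => x p.1 p.2); apply/matrixP => i j.
  rewrite summxE; have [hij | hij] := boolP ((i, j) \in S).
  + rewrite (bigD1 (i, j)) //= big1 ?addr0 => [|p /andP[_ hp]].
      by rewrite mxE delta_mx_entry eqxx mulr1.
    by rewrite mxE delta_off ?mulr0.
  + rewrite hx // big1 // => p hp.
    rewrite mxE delta_off ?mulr0 //; by apply: contraNneq hij => <-.
Qed.

Lemma delta_in_span (S : {set place n}) (i j : 'I_n) :
  (i, j) \in S -> in_span K S (delta_mx i j).
Proof.
move=> hij; apply/in_spanP => a b hab; rewrite delta_mx_entry.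
by have /negbTE -> : (i, j) != (a, b) by apply: contraNneq hab => <-.
Qed.

Lemma in_span_sub (S T : {set place n}) (x : 'M[K]_n) :
  S \subset T -> in_span K S x -> in_span K T x.
Proof.
move=> hST /in_spanP hx; apply/in_spanP => i j hij; apply: hx.
by apply: contra hij; apply: (subsetP hST).
Qed.

(* The (a,d) entry of [E_ab, E_bd] = E_ad - [d = a] E_bb is 1 as soon as the
   two factors are not both diagonal. *)
Lemma lie_br_delta_entry (a b d : 'I_n) :
  (a != b) || (b != d) -> lie_br (delta_mx a b) (delta_mx b d) a d = 1 :> K.
Proof.
move=> hoff; rewrite /lie_br mul_delta_mx mul_delta_mx_cond !mxE !eqxx.
case: (d =P a) => [ed | _] /=; last by rewrite mulr0n mxE subr0.
move: hoff; rewrite ed [b == a]eq_sym orbb => /negbTE hab.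
by rewrite mulr1n mxE hab subr0.
Qed.

End Spans.

Definition comp_closed (n : nat) (S : {set place n}) : Prop :=
  forall a b d : 'I_n, (a, b) \in S -> (b, d) \in S -> (a, d) \in S.

Lemma span_lie_closed (K : fieldType) (n : nat) (S : {set place n})
    (x y : 'M[K]_n) :
  comp_closed S -> in_span K S x -> in_span K S y -> in_span K S (lie_br x y).
Proof.
move=> hS /in_spanP hx /in_spanP hy; apply/in_spanP => i j hij.
have prod_vanish (u v : 'M[K]_n) :
    (forall i j, (i, j) \notin S -> u i j = 0) ->
    (forall i j, (i, j) \notin S -> v i j = 0) -> (u *m v) i j = 0.
  move=> hu hv; rewrite mxE; apply: big1 => k _.
  have [hik | hik] := boolP ((i, k) \in S); last by rewrite hu ?mul0r.
  have [hkj | hkj] := boolP ((k, j) \in S); last by rewrite hv ?mulr0.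
  by move: hij; rewrite (hS _ _ _ hik hkj).
rewrite /lie_br mxE (prod_vanish x y) // add0r.
by rewrite mxE (prod_vanish y x) // oppr0.
Qed.

Lemma span_lie_subalg (K : fieldType) (n : nat) (S T : {set place n}) :
  S \subset T -> comp_closed S -> is_lie_subalg K S T.
Proof.
by move=> hST hS; split=> [x | x y]; [apply: in_span_sub | apply: span_lie_closed].
Qed.

Lemma in_Aset (n : nat) (a b : 'I_n) : ((a, b) \in Aset n) = (b < a)%N.
Proof. by rewrite inE. Qed.

Lemma Aset_comp_closed (n : nat) : comp_closed (Aset n).
Proof. by move=> a b d; rewrite !in_Aset => hba hdb; apply: ltn_trans hba. Qed.

Section IdealAbsorption.
Variables (K : fieldType) (n : nat) (M : {set place n}).
Hypothesis hM : is_lie_ideal K M (Aset n).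

(* [E_ab, E_bd] lies in span M and has a nonzero (a,d) entry. *)
Lemma ideal_absorb_left (a b d : 'I_n) :
  (a, b) \in Aset n -> (b, d) \in M -> (a, d) \in M.
Proof.
move=> hab hbd; apply: contraT => had.
have hbr := hM.2 _ _ (delta_in_span K hab) (delta_in_span K hbd).
have a_ne_b : a != b by apply/eqP => eab; move: hab; rewrite eab in_Aset ltnn.
have := (in_spanP _ _).1 hbr a d had.
by rewrite lie_br_delta_entry ?a_ne_b // => /eqP; rewrite oner_eq0.
Qed.

(* [E_bd, E_ab] = - [E_ab, E_bd] lies in span M. *)
Lemma ideal_absorb_right (a b d : 'I_n) :
  (a, b) \in M -> (b, d) \in Aset n -> (a, d) \in M.
Proof.
move=> hab hbd; apply: contraT => had.
have hbr := hM.2 _ _ (delta_in_span K hbd) (delta_in_span K hab).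
have b_ne_d : b != d by apply/eqP => ebd; move: hbd; rewrite ebd in_Aset ltnn.
have := (in_spanP _ _).1 hbr a d had.
have -> : lie_br (delta_mx b d) (delta_mx a b)
          = - lie_br (delta_mx a b) (delta_mx b d) :> 'M[K]_n by rewrite /lie_br opprB.
by rewrite mxE lie_br_delta_entry ?b_ne_d ?orbT // => /eqP; rewrite oppr_eq0 oner_eq0.
Qed.

End IdealAbsorption.

Lemma marked_pair (n : nat) (B : {set place n}) (k t c : 'I_n) :
  (t < c)%N -> (c < k)%N -> (k, c) \in B -> (c, t) \in B ->
  (k, c) \in marked B (k, t) /\ (c, t) \in marked B (k, t).
Proof.
move=> htc hck hkc hct; split; rewrite inE; apply/existsP; exists c;
  by rewrite htc hck hkc hct eqxx ?orbT.
Qed.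

Lemma stepP (n : nat) (B : {set place n}) :
  step B = B \/ exists2 xi, xi \in B & step B = (B :\ xi) :\: marked B xi.
Proof.
rewrite /step /greatest; case: pickP => [xi /andP[hxi _] | _]; last by left.
by right; exists xi.
Qed.

Section DiagramStep.
Variables (n : nat) (M B : {set place n}).
Hypothesis hMA : M \subset Aset n.
Hypothesis absorb_left :
  forall a b d : 'I_n, (a, b) \in Aset n -> (b, d) \in M -> (a, d) \in M.
Hypothesis absorb_right :
  forall a b d : 'I_n, (a, b) \in M -> (b, d) \in Aset n -> (a, d) \in M.
Hypothesis hB : B \subset Aset n :\: M.
Hypothesis hBM_closed : comp_closed (B :|: M).
Variables k t : 'I_n.
Hypothesis hxi : (k, t) \in B.

Let B' := (B :\ (k, t)) :\: marked B (k, t).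

Lemma filled_inA (p : place n) : p \in B :|: M -> p \in Aset n.
Proof.
rewrite in_setU => /orP[/(subsetP hB) | /(subsetP hMA) //].
by rewrite in_setD => /andP[].
Qed.

Lemma unfilled_notM (p : place n) : p \in B -> p \notin M.
Proof. by move=> /(subsetP hB); rewrite in_setD => /andP[]. Qed.

Lemma step_sub (p : place n) : p \in B' :|: M -> p \in B :|: M.
Proof. by rewrite /B' !in_setU !in_setD => /orP[/and3P[_ _ ->] | ->]; rewrite ?orbT. Qed.

(* If xi = (k,t) factors as (k,c)(c,t) through B \cup M, then both factors are
   unfilled (a factor in M would put xi in M) and hence get marked. *)
Lemma factors_marked (c : 'I_n) :
  (t < c)%N -> (c < k)%N -> (k, c) \in B :|: M -> (c, t) \in B :|: M ->
  (k, c) \in marked B (k, t) /\ (c, t) \in marked B (k, t).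
Proof.
move=> htc hck hkc hct.
have xi_notM := unfilled_notM hxi.
apply: marked_pair => //.
- move: hkc; rewrite in_setU => /orP[// | hkcM]; case/negP: xi_notM.
  by apply: absorb_right hkcM _; rewrite in_Aset.
- move: hct; rewrite in_setU => /orP[// | hctM]; case/negP: xi_notM.
  by apply: absorb_left _ hctM; rewrite in_Aset.
Qed.

(* One step preserves the invariant: the composite (a,d) of two places of
   B_{i+1} \cup M lies in M or in B, and in the latter case it is neither xi
   nor marked, since otherwise one of its factors would have been marked. *)
Lemma step_comp_closed : comp_closed (B' :|: M).
Proof.
move=> a b d hab hbd.
have [habA hbdA] := (filled_inA (step_sub hab), filled_inA (step_sub hbd)).
rewrite in_setU; have [hadM | hadM] := boolP ((a, d) \in M); first by rewrite orbT.
have hab' : (a, b) \in B'.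
  move: hab; rewrite in_setU => /orP[// | habM]; case/negP: hadM.
  exact: absorb_right habM hbdA.
have hbd' : (b, d) \in B'.
  move: hbd; rewrite in_setU => /orP[// | hbdM]; case/negP: hadM.
  exact: absorb_left habA hbdM.
have survives p : p \in B' -> p \in B /\ p \notin marked B (k, t).
  by rewrite /B' !in_setD => /and3P[-> _ ->].
have [habB hab_unmarked] := survives _ hab'.
have [hbdB hbd_unmarked] := survives _ hbd'.
have filled p : p \in B -> p \in B :|: M by move=> hp; rewrite in_setU hp.
have hadB : (a, d) \in B.
  move: (hBM_closed (step_sub hab) (step_sub hbd)).
  by rewrite in_setU (negbTE hadM) orbF.
move: habA hbdA; rewrite !in_Aset => hba hdb.
rewrite orbF /B' !in_setD in_set1 hadB andbT; apply/andP; split.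
- apply/negP; rewrite inE => /existsP[c /= /and5P[htc hck hkc hct hmark]].
  case/orP: hmark => /eqP [-> ->] in habB hbdB hab_unmarked hbd_unmarked hba hdb *.
  + (* (a,d) = (k,c): the factor (k,b) is marked through (b,t) *)
    have hbt := hBM_closed (filled _ hbdB) (filled _ hct).
    have [hkb _] := factors_marked (ltn_trans htc hdb) hba (filled _ habB) hbt.
    by rewrite hkb in hab_unmarked.
  + (* (a,d) = (c,t): the factor (b,t) is marked through (k,b) *)
    have hkb := hBM_closed (filled _ hkc) (filled _ habB).
    have [_ hbt] := factors_marked hdb (ltn_trans hba hck) hkb (filled _ hbdB).
    by rewrite hbt in hbd_unmarked.
- apply/eqP => -[ea ed]; subst a d.
  have [hkb _] := factors_marked hdb hba (filled _ habB) (filled _ hbdB).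
  by rewrite hkb in hab_unmarked.
Qed.

End DiagramStep.

Section Construction.
Variables (K : fieldType) (n : nat) (M : {set place n}).
Hypothesis hMA : M \subset Aset n.
Hypothesis hM : is_lie_ideal K M (Aset n).

Lemma Bset_invariant (i : nat) :
  Bset M i \subset Aset n :\: M /\ comp_closed (Aiset M i).
Proof.
rewrite /Aiset; elim: i => [|i [hB hclosed]].
- split=> // a b d hab hbd.
  have ad_inA : (a, d) \in Aset n.
    apply: Aset_comp_closed (filled_inA hMA (subxx _) hab) (filled_inA hMA (subxx _) hbd).
  by rewrite /Bset /= in_setU in_setD ad_inA andbT orNb.
- rewrite /Bset iterS -/(Bset M i).
  have [-> | [[k t] hxi ->]] := stepP (Bset M i); first by split.
  split; last first.
    apply: step_comp_closed hxi => //.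
    + exact: ideal_absorb_left hM.
    + exact: ideal_absorb_right hM.
  by apply: subset_trans hB; apply/subsetP => p; rewrite !in_setD => /and3P[].
Qed.

End Construction.

Theorem lemma1 (K : fieldType) (hK : [pchar K]%R =i pred0) (n : nat) (hn : (2 <= n)%N)
  (M : {set place n}) (hMA : M \subset Aset n)
  (hM : is_lie_ideal K M (Aset n)) :
  forall i : nat, (i <= nsteps M)%N ->
    is_lie_subalg K (Aiset M i) (Aset n) /\ is_lie_subalg K M (Aiset M i).
Proof.
move=> i _.
have [hB hAi_closed] := Bset_invariant hMA hM i.
have hM_closed : comp_closed M.
  move=> a b d hab hbd; exact: (ideal_absorb_right hM hab (subsetP hMA _ hbd)).
split; apply: span_lie_subalg => //; last exact: subsetUr.
rewrite subUset hMA andbT; apply: subset_trans hB _; exact: subsetDl.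
Qed.
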